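(* Every Lindelöf Hausdorff topological group $G$ which is a $P$-space and satisfies $\psi(G)\leq\mathfrak c$ has $w(G)\leq\mathfrak c$.
   Context: A space is a $P$-space if every $G_\delta$-subset is open. $\psi$ pseudocharacter, $w$ weight, $\mathfrak c=2^\omega$. *)

From Stdlib Require Import Classical.

Definition set (T : Type) := T -> Prop.

Definition is_topology {T : Type} (op : set T -> Prop) : Prop :=
  op (fun _ => True) /\
  (forall U V, op U -> op V -> op (fun x => U x /\ V x)) /\
  (forall (I : Type) (F : I -> set T), (forall i, op (F i)) ->
     op (fun x => exists i, F i x)).

Definition prod_open {T : Type} (op : set T -> Prop) (W : set (T * T)) : Prop :=
  forall p, W p -> exists U V, op U /\ op V /\ U (fst p) /\ V (snd p) /\
    (forall a b, U a -> V b -> W (a, b)).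

Definition is_group {T : Type} (mul : T -> T -> T) (inv : T -> T) (e : T) : Prop :=
  (forall x y z, mul x (mul y z) = mul (mul x y) z) /\
  (forall x, mul e x = x) /\ (forall x, mul x e = x) /\
  (forall x, mul (inv x) x = e) /\ (forall x, mul x (inv x) = e).

Definition is_topological_group {T : Type} (op : set T -> Prop)
    (mul : T -> T -> T) (inv : T -> T) (e : T) : Prop :=
  is_topology op /\ is_group mul inv e /\
  (forall W, op W -> prod_open op (fun p => W (mul (fst p) (snd p)))) /\
  (forall W, op W -> op (fun x => W (inv x))).

Definition countable_pred {I : Type} (A : I -> Prop) : Prop :=
  exists f : {i : I | A i} -> nat, forall a b, f a = f b -> a = b.

Definition lindelof {T : Type} (op : set T -> Prop) : Prop :=
  forall (I : Type) (U : I -> set T), (forall i, op (U i)) ->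
    (forall x, exists i, U i x) ->
    exists J : I -> Prop, countable_pred J /\ (forall x, exists i, J i /\ U i x).

Definition hausdorff {T : Type} (op : set T -> Prop) : Prop :=
  forall x y : T, x <> y -> exists U V, op U /\ op V /\ U x /\ V y /\
    (forall z, U z -> V z -> False).

Definition P_space {T : Type} (op : set T -> Prop) : Prop :=
  forall U : nat -> set T, (forall n, op (U n)) -> op (fun x => forall n, U n x).

Definition card_le_c (I : Type) : Prop :=
  exists f : I -> (nat -> bool), forall a b, f a = f b -> a = b.

Definition pseudochar_le_c {T : Type} (op : set T -> Prop) : Prop :=
  forall x : T, exists (I : Type) (U : I -> set T), card_le_c I /\
    (forall i, op (U i) /\ U i x) /\ (forall y, (forall i, U i y) -> y = x).

Definition weight_le_c {T : Type} (op : set T -> Prop) : Prop :=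
  exists (I : Type) (B : I -> set T), card_le_c I /\ (forall i, op (B i)) /\
    (forall W x, op W -> W x -> exists i, B i x /\ (forall y, B i y -> W y)).

(* Every neighbourhood U of e in a topological P-group contains an open subgroup: choose
   symmetric V_(n+1) with V_(n+1) V_(n+1) within V_n, starting from V_0 = U; the intersection
   of the V_n is a subgroup, and it is open because it is a G_delta.  Shrinking the c open sets
   witnessing psi(G) <= c at e to open subgroups H_i gives subgroups with intersection {e}.
   Open subgroups are closed, so by Lindelöfness every neighbourhood of e contains a countable
   intersection of the H_i; these c^omega = c open subgroups form a local base at e.  Each of
   them has countably many cosets covering G (Lindelöf again), and all these cosets together
   form a base of size c. *)
From Stdlib Require Import Classical ClassicalEpsilon FunctionalExtensionality
  PropExtensionality Arith Cantor.

Lemma card_le_c_nat : card_le_c nat.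
Proof.
  exists (fun n k => Nat.eqb k n); intros n m h.
  pose proof (equal_f h n) as hn; cbv beta in hn.
  rewrite Nat.eqb_refl in hn; symmetry in hn.
  now apply Nat.eqb_eq in hn.
Qed.

Lemma card_le_c_option (I : Type) : card_le_c I -> card_le_c (option I).
Proof.
  intros [f finj].
  exists (fun o k => match o, k with
                     | None, _ => false
                     | Some _, 0 => true
                     | Some i, S k' => f i k' end).
  intros [a|] [b|] h; try reflexivity;
    try (pose proof (equal_f h 0); discriminate).
  f_equal; apply finj, functional_extensionality; intro k.
  exact (equal_f h (S k)).
Qed.

Lemma card_le_c_prod (A B : Type) : card_le_c A -> card_le_c B -> card_le_c (A * B).
Proof.
  intros [f finj] [g ginj].
  exists (fun p k => match of_nat k with
                     | (0, j) => f (fst p) j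
                     | (S _, j) => g (snd p) j end).
  intros [a b] [a' b'] h; simpl in h.
  assert (hk : forall n j, (match n with 0 => f a j | S _ => g b j end)
                         = (match n with 0 => f a' j | S _ => g b' j end)).
  { intros n j; pose proof (equal_f h (to_nat (n, j))) as hj; cbv beta in hj.
    now rewrite cancel_of_to in hj. }
  f_equal; [apply finj | apply ginj];
    apply functional_extensionality; intro j; [exact (hk 0 j) | exact (hk 1 j)].
Qed.

Lemma card_le_c_seq (I : Type) : card_le_c I -> card_le_c (nat -> I).
Proof.
  intros [f finj].
  exists (fun s k => let (n, j) := of_nat k in f (s n) j).
  intros s s' h; apply functional_extensionality; intro n.
  apply finj, functional_extensionality; intro j.
  pose proof (equal_f h (to_nat (n, j))) as hj; cbv beta in hj.
  now rewrite cancel_of_to in hj.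
Qed.

Section Topology.
Variables (T : Type) (op : set T -> Prop).
Hypothesis top : is_topology op.

Lemma open_of_locally_open (P : set T) :
  (forall x, P x -> exists V, op V /\ V x /\ forall z, V z -> P z) -> op P.
Proof.
  intro hP.
  assert (E : (fun x => exists V : {V : set T | op V /\ forall z, V z -> P z},
                 proj1_sig V x) = P).
  { apply functional_extensionality; intro x; apply propositional_extensionality; split.
    - intros [V Vx]; exact (proj2 (proj2_sig V) x Vx).
    - intro Px; destruct (hP x Px) as [V [oV [Vx hV]]].
      now exists (exist _ V (conj oV hV)). }
  rewrite <- E; apply (proj2 (proj2 top)); intro V; exact (proj1 (proj2_sig V)).
Qed.

Lemma open_empty : op (fun _ => False).
Proof. apply open_of_locally_open; intros x []. Qed.

(* The subcover is enumerated by a sequence; [None] fills the unused slots. *)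
Lemma lindelof_seq_subcover (I : Type) (U : I -> set T) :
  lindelof op -> (forall i, op (U i)) -> (forall x, exists i, U i x) ->
  exists s : nat -> option I, forall x, exists n i, s n = Some i /\ U i x.
Proof.
  intros LL oU cover.
  destruct (LL I U oU cover) as [J [[f finj] hJ]].
  assert (dec : forall n, exists o : option I,
             forall j : {i | J i}, f j = n -> o = Some (proj1_sig j)).
  { intro n; destruct (classic (exists j, f j = n)) as [[j hj] | none].
    - exists (Some (proj1_sig j)); intros j' hj'.
      rewrite (finj j j'); congruence.
    - exists None; intros j hj; exfalso; eauto. }
  destruct (choice _ dec) as [s hs].
  exists s; intro x; destruct (hJ x) as [i [Ji Ui]].
  exists (f (exist _ i Ji)), i; split; [exact (hs _ (exist _ i Ji) eq_refl) | exact Ui].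
Qed.

End Topology.

Section TopologicalGroup.
Variables (G : Type) (op : set G -> Prop) (mul : G -> G -> G) (inv : G -> G) (e : G).
Hypothesis TG : is_topological_group op mul inv e.

Lemma mul_assoc x y z : mul x (mul y z) = mul (mul x y) z.
Proof. apply (proj1 (proj1 (proj2 TG))). Qed.
Lemma mul_e_l x : mul e x = x.
Proof. apply (proj1 (proj2 (proj1 (proj2 TG)))). Qed.
Lemma mul_e_r x : mul x e = x.
Proof. apply (proj1 (proj2 (proj2 (proj1 (proj2 TG))))). Qed.
Lemma mul_inv_l x : mul (inv x) x = e.
Proof. apply (proj1 (proj2 (proj2 (proj2 (proj1 (proj2 TG)))))). Qed.
Lemma mul_inv_r x : mul x (inv x) = e.
Proof. apply (proj2 (proj2 (proj2 (proj2 (proj1 (proj2 TG)))))). Qed.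

Lemma inv_e : inv e = e.
Proof. rewrite <- (mul_e_r (inv e)); apply mul_inv_l. Qed.

Lemma mul_inv_cancel_l a b : mul a (mul (inv a) b) = b.
Proof. now rewrite mul_assoc, mul_inv_r, mul_e_l. Qed.

Lemma inv_inv a : inv (inv a) = a.
Proof. now rewrite <- (mul_e_r (inv (inv a))), <- (mul_inv_l a), mul_assoc, mul_inv_l, mul_e_l. Qed.

Lemma inv_mul a b : inv (mul a b) = mul (inv b) (inv a).
Proof.
  assert (E : mul (mul a b) (mul (inv b) (inv a)) = e).
  { now rewrite <- mul_assoc, mul_inv_cancel_l, mul_inv_r. }
  now rewrite <- (mul_e_r (inv (mul a b))), <- E, mul_assoc, mul_inv_l, mul_e_l.
Qed.

Let top : is_topology op := proj1 TG.

Lemma open_inter U V : op U -> op V -> op (fun x => U x /\ V x).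
Proof. apply (proj1 (proj2 top)). Qed.

Lemma open_inv W : op W -> op (fun x => W (inv x)).
Proof. apply (proj2 (proj2 (proj2 TG))). Qed.

Lemma open_translate a W : op W -> op (fun y => W (mul a y)).
Proof.
  intro oW; apply open_of_locally_open; [exact top|]; intros y Wy.
  destruct (proj1 (proj2 (proj2 TG)) W oW (a, y) Wy) as [A [B [_ [oB [Aa [By h]]]]]].
  exists B; split; [exact oB | split; [exact By|]]; intros z Bz; exact (h a z Aa Bz).
Qed.

Definition symmetric (V : set G) : Prop := forall x, V x -> V (inv x).

Lemma exists_symmetric_sqrt_nbhd (V : set G) : op V -> V e ->
  exists V', op V' /\ V' e /\ symmetric V' /\ forall x y, V' x -> V' y -> V (mul x y).
Proof.
  intros oV Ve.
  assert (Vee : V (mul (fst (e, e)) (snd (e, e)))) by (simpl; now rewrite mul_e_l).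
  destruct (proj1 (proj2 (proj2 TG)) V oV (e, e) Vee) as [A [B [oA [oB [Ae [Be h]]]]]].
  exists (fun x => (A x /\ B x) /\ (A (inv x) /\ B (inv x))).
  split; [|split; [|split]].
  - apply open_inter; [apply open_inter; assumption|].
    apply (open_inv (fun x => A x /\ B x)), open_inter; assumption.
  - now rewrite inv_e.
  - intros x [hx hix]; rewrite inv_inv; now split.
  - intros x y [[Ax _] _] [[_ By] _]; exact (h x y Ax By).
Qed.

Record open_subgroup (H : set G) : Prop := {
  subgroup_open : op H;
  subgroup_e : H e;
  subgroup_mul : forall x y, H x -> H y -> H (mul x y);
  subgroup_inv : symmetric H }.

Lemma open_subgroup_full : open_subgroup (fun _ => True).
Proof. split; [exact (proj1 top) | exact I | intros; exact I | intros x _; exact I]. Qed.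

Lemma open_subgroup_same_coset H a x y : open_subgroup H ->
  H (mul (inv a) x) -> H (mul (inv a) y) -> H (mul (inv x) y).
Proof.
  intros sH hx hy.
  pose proof (subgroup_mul _ sH _ _ (subgroup_inv _ sH _ hx) hy) as hxy.
  now rewrite inv_mul, inv_inv, <- mul_assoc, mul_inv_cancel_l in hxy.
Qed.

Lemma open_subgroup_coset_open H a : open_subgroup H -> op (fun y => H (mul (inv a) y)).
Proof. intro sH; exact (open_translate (inv a) H (subgroup_open _ sH)). Qed.

Lemma open_subgroup_compl_open H : open_subgroup H -> op (fun y => ~ H y).
Proof.
  intro sH; apply open_of_locally_open; [exact top|]; intros y ny.
  exists (fun z => H (mul (inv y) z)); split; [now apply open_subgroup_coset_open|].
  split; [rewrite mul_inv_l; exact (subgroup_e _ sH)|].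
  intros z hz Hz; apply ny.
  pose proof (subgroup_mul _ sH _ _ Hz (subgroup_inv _ sH _ hz)) as hy.
  now rewrite inv_mul, inv_inv, mul_inv_cancel_l in hy.
Qed.

Lemma lindelof_cosets H : lindelof op -> open_subgroup H ->
  exists c : nat -> option G, forall y, exists n x, c n = Some x /\ H (mul (inv x) y).
Proof.
  intros LL sH; apply (lindelof_seq_subcover G op); [exact LL| |].
  - intro x; now apply open_subgroup_coset_open.
  - intro y; exists y; rewrite mul_inv_l; exact (subgroup_e _ sH).
Qed.

Lemma weight_le_c_of_subgroup_base (K : Type) (N : K -> set G) :
  lindelof op -> card_le_c K -> (forall k, open_subgroup (N k)) ->
  (forall W, op W -> W e -> exists k, forall y, N k y -> W y) ->
  weight_le_c op.
Proof.
  intros LL cK sN base_e.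
  destruct (choice _ (fun k => lindelof_cosets (N k) LL (sN k))) as [C hC].
  exists (K * nat)%type, (fun p y => exists x, C (fst p) (snd p) = Some x /\
                                               N (fst p) (mul (inv x) y)).
  split; [exact (card_le_c_prod _ _ cK card_le_c_nat)|]; split.
  - intros [k n]; simpl; destruct (C k n) as [x|] eqn:Ckn.
    + apply open_of_locally_open; [exact top|]; intros y [x' [hx' hy]].
      injection hx' as <-.
      exists (fun z => N k (mul (inv x) z)); split; [now apply open_subgroup_coset_open|].
      split; [exact hy|]; intros z hz; now exists x.
    + replace (fun y => exists x, None = Some x /\ N k (mul (inv x) y))
        with (fun _ : G => False); [exact (open_empty _ _ top)|].
      apply functional_extensionality; intro y; apply propositional_extensionality.
      split; [intros []| intros [x [h _]]; discriminate].
  - intros W x oW Wx.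
    destruct (base_e (fun z => W (mul x z))) as [k hk];
      [exact (open_translate x W oW) | now rewrite mul_e_r|].
    destruct (hC k x) as [n [a [Ckn hx]]].
    exists (k, n); split; [now exists a|].
    intros y [a' [Ckn' hy]]; simpl in Ckn'; rewrite Ckn in Ckn'; injection Ckn' as <-.
    pose proof (hk _ (open_subgroup_same_coset _ _ _ _ (sN k) hx hy)) as hW.
    now rewrite mul_inv_cancel_l in hW.
Qed.

Hypothesis PS : P_space op.

Lemma open_subgroup_countable_inter (H : nat -> set G) :
  (forall n, open_subgroup (H n)) -> open_subgroup (fun x => forall n, H n x).
Proof.
  intro sH; split.
  - apply PS; intro n; exact (subgroup_open _ (sH n)).
  - intro n; exact (subgroup_e _ (sH n)).
  - intros x y hx hy n; exact (subgroup_mul _ (sH n) _ _ (hx n) (hy n)).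
  - intros x hx n; exact (subgroup_inv _ (sH n) _ (hx n)).
Qed.

Lemma open_subgroup_in_nbhd (U : set G) : op U -> U e ->
  exists H, open_subgroup H /\ forall x, H x -> U x.
Proof.
  intros oU Ue.
  destruct (choice (fun V V' => op V -> V e ->
      op V' /\ V' e /\ symmetric V' /\ forall x y, V' x -> V' y -> V (mul x y)))
    as [sqrt hsqrt].
  { intro V; destruct (classic (op V /\ V e)) as [[oV Ve] | bad].
    - destruct (exists_symmetric_sqrt_nbhd V oV Ve) as [V' hV']; now exists V'.
    - exists V; intros oV Ve; exfalso; now apply bad. }
  set (chain n := Nat.iter n sqrt U).
  assert (nbhd : forall n, op (chain n) /\ chain n e).
  { induction n as [|n [oc ce]]; [now split|].
    destruct (hsqrt _ oc ce) as [o [he _]]; now split. }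
  assert (hstep : forall n, symmetric (chain (S n)) /\
             forall x y, chain (S n) x -> chain (S n) y -> chain n (mul x y)).
  { intro n; destruct (nbhd n) as [oc ce]; now destruct (hsqrt _ oc ce) as [_ [_ h]]. }
  exists (fun x => forall n, chain (S n) x); split; [split|].
  - apply PS; intro n; exact (proj1 (nbhd (S n))).
  - intro n; exact (proj2 (nbhd (S n))).
  - intros x y hx hy n; exact (proj2 (hstep (S n)) x y (hx (S n)) (hy (S n))).
  - intros x hx n; exact (proj1 (hstep n) x (hx n)).
  - intros x hx; rewrite <- (mul_e_r x).
    exact (proj2 (hstep 0) x e (hx 0) (proj2 (nbhd 1))).
Qed.

Lemma separating_open_subgroups : pseudochar_le_c op ->
  exists (I : Type) (H : I -> set G), card_le_c I /\ (forall i, open_subgroup (H i)) /\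
    forall y, y <> e -> exists i, ~ H i y.
Proof.
  intro PC; destruct (PC e) as [I [U [cI [oU sepU]]]].
  destruct (choice (fun i H => open_subgroup H /\ forall x, H x -> U i x))
    as [H hH].
  { intro i; exact (open_subgroup_in_nbhd (U i) (proj1 (oU i)) (proj2 (oU i))). }
  exists I, H; split; [exact cI|]; split; [intro i; exact (proj1 (hH i))|].
  intros y ny; apply NNPP; intro all_in; apply ny, sepU; intro i.
  apply (proj2 (hH i)), NNPP; intro nH; apply all_in; now exists i.
Qed.

Section CountableIntersections.
Variables (I : Type) (H : I -> set G).
Hypothesis sH : forall i, open_subgroup (H i).

Definition seq_inter (s : nat -> option I) : set G :=
  fun x => forall n, (match s n with Some i => H i | None => fun _ => True end) x.

Lemma open_subgroup_seq_inter s : open_subgroup (seq_inter s).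
Proof.
  apply (open_subgroup_countable_inter
           (fun n => match s n with Some i => H i | None => fun _ => True end)).
  intro n; destruct (s n); [apply sH | exact open_subgroup_full].
Qed.

(* Since the complements of the [H i] and [W] cover [G], a countable subcover exists;
   its members of the form [~ H i] determine [s]. *)
Lemma seq_inter_in_nbhd (W : set G) : lindelof op ->
  (forall y, y <> e -> exists i, ~ H i y) -> op W -> W e ->
  exists s, forall y, seq_inter s y -> W y.
Proof.
  intros LL sep oW We.
  destruct (lindelof_seq_subcover G op (option I)
              (fun o y => match o with Some i => ~ H i y | None => W y end))
    as [s hs]; [exact LL| | |].
  - intros [i|]; [exact (open_subgroup_compl_open _ (sH i)) | exact oW].
  - intro y; destruct (classic (W y)) as [Wy | nWy]; [now exists None|].
    destruct (sep y) as [i hi]; [intros ->; contradiction | now exists (Some i)].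
  - exists (fun n => match s n with Some o => o | None => None end).
    intros y hy; destruct (hs y) as [n [[i|] [sn hi]]]; [|exact hi].
    exfalso; apply hi; specialize (hy n); cbv beta in hy; now rewrite sn in hy.
Qed.

End CountableIntersections.
End TopologicalGroup.

Theorem mainTheorem12 (G : Type) (op : set G -> Prop)
  (mul : G -> G -> G) (inv : G -> G) (e : G) :
  is_topological_group op mul inv e ->
  lindelof op -> hausdorff op -> P_space op -> pseudochar_le_c op ->
  weight_le_c op.
Proof.
  intros TG LL _ PS PC.
  destruct (separating_open_subgroups G op mul inv e TG PS PC) as [I [H [cI [sH sep]]]].
  apply (weight_le_c_of_subgroup_base G op mul inv e TG (nat -> option I)
           (seq_inter G I H) LL).
  - exact (card_le_c_seq _ (card_le_c_option _ cI)).
  - intro s; exact (open_subgroup_seq_inter G op mul inv e TG PS I H sH s).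
  - intros W oW We; exact (seq_inter_in_nbhd G op mul inv e TG I H sH W LL sep oW We).
Qed.
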